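(* Let $\{\omega_n\}_{n\ge0}$ be a sequence of real numbers whose projection $\{\omega_n \bmod 1\}_{n\ge0}$ to $\mathbb{T}$ has the repetition property, and suppose there exist an integer $k\ge1$ and integers $a_1,\ldots,a_k$ with $|a_k|=1$ such that $$\omega_n + a_1\omega_{n-1}+a_2\omega_{n-2}+\cdots+a_k\omega_{n-k}=0 \quad\text{for all } n\ge k.$$ Then for every $r\in\mathbb{Q}$, the projection $\{r\omega_n \bmod 1\}_{n\ge0}$ to $\mathbb{T}$ has the repetition property, and it has the joint repetition property with $\{\omega_n \bmod 1\}_{n\ge0}$.
   Context: $\mathbb{T}=\mathbb{R}/\mathbb{Z}$ with metric $\mathrm{dist}(x,y)=\langle x-y\rangle$, where $\langle\tau\rangle=\min\{|\hat\tau-p|:p\in\mathbb{Z}\}$ for any representative $\hat\tau\in\mathbb{R}$ of $\tau$. $\mathbb{Z}_+=\{1,2,\ldots\}$. A sequence $\{\omega_n\}_{n\ge0}$ in a metric space $\Omega$ has the repetition property if for every $\varepsilon>0$ and $r \in \mathbb{Z}_+$ there exists $q \in \mathbb{Z}_+$ such that $\mathrm{dist}(\omega_n,\omega_{n+q}) < \varepsilon$ for $n = 0,1,\ldots, rq$. A family of sequences has the joint repetition property if each of them has the repetition property and, for each finite subfamily and each $\varepsilon>0$, $r\in\mathbb{Z}_+$, a single $q\in\mathbb{Z}_+$ can be chosen that works simultaneously for all sequences in the subfamily. *)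

From Stdlib Require Import Reals QArith Qreals ZArith Lia Lra.
Open Scope R_scope.

(* <t> = distance from t to the nearest integer = min(frac t, 1 - frac t). *)
Definition tnorm (t : R) : R := Rmin (frac_part t) (1 - frac_part t).

Definition tdist (x y : R) : R := tnorm (x - y).

Definition rep_prop (w : nat -> R) : Prop :=
  forall (eps : R) (r : nat), 0 < eps -> (1 <= r)%nat ->
    exists q : nat, (1 <= q)%nat /\
      forall n : nat, (n <= r * q)%nat -> tdist (w n) (w (n + q)%nat) < eps.

Definition joint_rep_prop (F : list (nat -> R)) : Prop :=
  (forall w, List.In w F -> rep_prop w) /\
  (forall G : list (nat -> R), (forall w, List.In w G -> List.In w F) ->
    forall (eps : R) (r : nat), 0 < eps -> (1 <= r)%nat ->
      exists q : nat, (1 <= q)%nat /\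
        forall w, List.In w G ->
          forall n : nat, (n <= r * q)%nat -> tdist (w n) (w (n + q)%nat) < eps).

From Stdlib Require Import Reals QArith Qreals ZArith Lia Lra List Classical.
Open Scope R_scope.

(** Given a
    denominator [m], we produce return times [Q] for which every difference
    [w n - w (n+Q)] on the horizon is close to a multiple of [m]; then both
    [w] and [(p/m) w] return close to integers at time [Q].

    1. Take a return time [q] of [w] with tiny error and round the
       differences [w n - w (n+q)] to integers [z n].  The differences satisfy
       the recurrence, so the rounded [z] satisfies it exactly
       ([zrec_of_rounding]).
    2. By pigeonhole, two of the length-[k] windows of [z] at positions
       [i q] and [j q] agree modulo [m] ([window_pigeonhole]).  Since [a k] is
       a unit, the recurrence propagates divisibility forward and backward, so
       [z] is [L q]-periodic modulo [m], where [L = j - i]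
       ([periodic_mod_of_window]).
    3. Telescoping over [m L] steps of size [q], [w n - w (n + m L q)] is close
       to the sum of [m L] values of [z], which is divisible by [m] by
       periodicity ([long_return_near_multiple]).
    The theorem follows by taking [Q = m L q] as a common return time. *)

Definition nearest (t : R) : Z := Int_part (t + / 2).

Lemma nearest_dist (t : R) : Rabs (t - IZR (nearest t)) = tnorm t.
Proof.
  unfold nearest, tnorm, frac_part.
  destruct (base_Int_part t) as [Hlo Hhi].
  destruct (Rlt_le_dec (t - IZR (Int_part t)) (/ 2)) as [Hf | Hf].
  - rewrite <- (Int_part_spec (t + / 2) (Int_part t)) by lra.
    rewrite Rmin_left, Rabs_right; lra.
  - rewrite <- (Int_part_spec (t + / 2) (Int_part t + 1)) by (rewrite plus_IZR; lra).
    rewrite plus_IZR, Rmin_right, Rabs_left1; lra.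
Qed.

Lemma tnorm_le_int (t : R) (c : Z) : tnorm t <= Rabs (t - IZR c).
Proof.
  unfold tnorm, frac_part. destruct (base_Int_part t) as [Hlo Hhi].
  destruct (Z_le_gt_dec c (Int_part t)) as [Hc | Hc].
  - apply IZR_le in Hc. eapply Rle_trans; [apply Rmin_l |]. rewrite Rabs_right; lra.
  - assert (Hc' : (Int_part t + 1 <= c)%Z) by lia. apply IZR_le in Hc'.
    rewrite plus_IZR in Hc'. eapply Rle_trans; [apply Rmin_r |]. rewrite Rabs_left1; lra.
Qed.

Fixpoint zsum (f : nat -> Z) (c : nat) : Z :=
  match c with O => 0%Z | S c' => (zsum f c' + f c')%Z end.

Lemma zsum_IZR (f : nat -> Z) (c : nat) :
  IZR (zsum f (S c)) = sum_f_R0 (fun i => IZR (f i)) c.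
Proof.
  induction c as [|c IH]; cbn [zsum sum_f_R0] in *.
  - now rewrite Z.add_0_l.
  - now rewrite plus_IZR, IH.
Qed.

Lemma zsum_ext (f g : nat -> Z) (c : nat) :
  (forall u, (u < c)%nat -> f u = g u) -> zsum f c = zsum g c.
Proof.
  induction c as [|c IH]; intros H; cbn [zsum]; [reflexivity|].
  rewrite IH, H; [reflexivity | lia | intros; apply H; lia].
Qed.

Lemma zsum_sub (f g : nat -> Z) (c : nat) :
  zsum (fun u => f u - g u)%Z c = (zsum f c - zsum g c)%Z.
Proof. induction c as [|c IH]; cbn [zsum]; [reflexivity | rewrite IH; lia]. Qed.

Lemma zsum_split (f : nat -> Z) (b c : nat) :
  zsum f (b + c) = (zsum f b + zsum (fun u => f (b + u)%nat) c)%Z.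
Proof.
  induction c as [|c IH]; cbn [zsum]; [now rewrite Nat.add_0_r, Z.add_0_r|].
  rewrite Nat.add_succ_r; cbn [zsum]; rewrite IH; lia.
Qed.

Lemma zsum_divide (m : Z) (f : nat -> Z) (c : nat) :
  (forall u, (u < c)%nat -> (m | f u)%Z) -> (m | zsum f c)%Z.
Proof.
  induction c as [|c IH]; intros H; cbn [zsum]; [apply Z.divide_0_r|].
  apply Z.divide_add_r; [apply IH; intros; apply H|apply H]; lia.
Qed.

Lemma telescope_near_int (F : nat -> R) (G : nat -> Z) (d : R) (c : nat) :
  (forall u, (u < c)%nat -> Rabs (F u - F (S u) - IZR (G u)) < d) ->
  Rabs (F O - F c - IZR (zsum G c)) <= INR c * d.
Proof.
  induction c as [|c IH]; intros H; cbn [zsum].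
  - replace (F O - F O - IZR 0) with 0 by (simpl; ring). rewrite Rabs_R0. simpl; lra.
  - rewrite plus_IZR, S_INR.
    replace (F O - F (S c) - (IZR (zsum G c) + IZR (G c)))
      with ((F O - F c - IZR (zsum G c)) + (F c - F (S c) - IZR (G c))) by ring.
    eapply Rle_trans; [apply Rabs_triang|].
    assert (Hc := IH (fun u Hu => H u ltac:(lia))).
    assert (Hl := H c ltac:(lia)). lra.
Qed.

(** * Pigeonhole principle for residue windows *)

Lemma pigeonhole (M : nat) (c : nat -> nat) :
  (forall j, (j <= M)%nat -> (c j < M)%nat) ->
  exists i j, (i < j <= M)%nat /\ c i = c j.
Proof.
  intros Hc. apply NNPP; intros Hno.
  assert (Hnd : NoDup (map c (seq 0 (S M)))).
  { apply NoDup_map_NoDup_ForallPairs; [|apply seq_NoDup].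
    intros i j Hi Hj Hij. apply in_seq in Hi, Hj.
    destruct (lt_eq_lt_dec i j) as [[Hlt|Heq]|Hgt]; [|exact Heq|];
      exfalso; apply Hno; [exists i, j | exists j, i]; split; auto; lia. }
  assert (Hincl : incl (map c (seq 0 (S M))) (seq 0 M)).
  { intros y Hy. apply in_map_iff in Hy as [j [<- Hj]]. apply in_seq in Hj.
    apply in_seq. specialize (Hc j ltac:(lia)). lia. }
  pose proof (NoDup_incl_length Hnd Hincl) as Hlen.
  rewrite length_map, !length_seq in Hlen. lia.
Qed.

(* Base-[m] encoding of the residues mod [m] of [f 0, ..., f (k-1)]. *)
Fixpoint residue_code (m : Z) (k : nat) (f : nat -> Z) : Z :=
  match k with
  | O => 0%Z
  | S k' => (f O mod m + m * residue_code m k' (fun i => f (S i)))%Z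
  end.

Lemma residue_code_range (m : Z) (k : nat) (f : nat -> Z) :
  (0 < m)%Z -> (0 <= residue_code m k f < m ^ Z.of_nat k)%Z.
Proof.
  intros Hm. revert f; induction k as [|k IH]; intros f; cbn [residue_code]; [simpl; lia|].
  rewrite Nat2Z.inj_succ, Z.pow_succ_r by lia.
  specialize (IH (fun i => f (S i))). pose proof (Z.mod_pos_bound (f O) m Hm). nia.
Qed.

Lemma residue_code_inj (m : Z) (k : nat) (f g : nat -> Z) :
  (0 < m)%Z -> residue_code m k f = residue_code m k g ->
  forall i, (i < k)%nat -> (m | f i - g i)%Z.
Proof.
  intros Hm. revert f g; induction k as [|k IH]; intros f g Hcode i Hi; [lia|].
  cbn [residue_code] in Hcode.
  pose proof (Z.mod_pos_bound (f O) m Hm). pose proof (Z.mod_pos_bound (g O) m Hm).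
  assert (Htail : residue_code m k (fun i => f (S i)) = residue_code m k (fun i => g (S i))) by nia.
  destruct i as [|i]; [|exact (IH _ _ Htail i ltac:(lia))].
  apply Z.mod_divide; [lia|].
  rewrite Zminus_mod. replace (f O mod m)%Z with (g O mod m)%Z by nia.
  rewrite Z.sub_diag. apply Z.mod_0_l. lia.
Qed.

Lemma window_pigeonhole (m : Z) (k : nat) (f : nat -> nat -> Z) :
  (0 < m)%Z ->
  exists i j, (i < j <= Z.to_nat (m ^ Z.of_nat k))%nat /\
    forall t, (t < k)%nat -> (m | f i t - f j t)%Z.
Proof.
  intros Hm.
  destruct (pigeonhole (Z.to_nat (m ^ Z.of_nat k))
              (fun j => Z.to_nat (residue_code m k (f j)))) as [i [j [Hij Hc]]].
  { intros j _. pose proof (residue_code_range m k (f j) Hm). lia. }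
  exists i, j. split; [exact Hij|]. apply residue_code_inj; [exact Hm|].
  pose proof (residue_code_range m k (f i) Hm).
  pose proof (residue_code_range m k (f j) Hm). lia.
Qed.

(** * Integer linear recurrences with unit last coefficient *)

Section IntegerRecurrence.

Variables (k : nat) (a : nat -> Z).
Hypothesis k_pos : (1 <= k)%nat.
Hypothesis a_last_unit : Z.abs (a k) = 1%Z.

Definition zrec (y : nat -> Z) (t : nat) : Z :=
  (y t + zsum (fun i => a (S i) * y (t - S i)%nat) k)%Z.

Lemma zrec_last (y : nat -> Z) (t : nat) :
  zrec y t = (y t + zsum (fun i => a (S i) * y (t - S i)%nat) (k - 1)
              + a k * y (t - k)%nat)%Z.
Proof.
  unfold zrec. replace k with (S (k - 1)) at 1 by lia. cbn [zsum].
  replace (S (k - 1)) with k by lia. lia.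
Qed.

Lemma zrec_sub_shift (y : nat -> Z) (P t : nat) :
  (k <= t)%nat ->
  zrec (fun x => y x - y (x + P)%nat)%Z t = (zrec y t - zrec y (t + P))%Z.
Proof.
  intros Ht. unfold zrec.
  rewrite (zsum_ext _ (fun i => a (S i) * y (t - S i)%nat - a (S i) * y (t + P - S i)%nat)%Z).
  - rewrite zsum_sub. lia.
  - intros i Hi. replace (t - S i + P)%nat with (t + P - S i)%nat by lia. ring.
Qed.

Definition div_window (m : Z) (y : nat -> Z) (s : nat) : Prop :=
  forall i, (i < k)%nat -> (m | y (s + i)%nat)%Z.

Lemma div_window_forward (m : Z) (y : nat -> Z) (s : nat) :
  zrec y (s + k) = 0%Z -> div_window m y s -> div_window m y (S s).
Proof.
  intros Hrec Hwin i Hi.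
  destruct (Nat.lt_ge_cases (S i) k) as [Hlt | Hge].
  - replace (S s + i)%nat with (s + S i)%nat by lia. now apply Hwin.
  - replace (S s + i)%nat with (s + k)%nat by lia. unfold zrec in Hrec.
    replace (y (s + k)%nat)
      with (- zsum (fun j => a (S j) * y (s + k - S j)%nat) k)%Z by lia.
    apply Z.divide_opp_r, zsum_divide. intros j Hj.
    apply Z.divide_mul_r. replace (s + k - S j)%nat with (s + (k - S j))%nat by lia.
    apply Hwin. lia.
Qed.

Lemma div_window_backward (m : Z) (y : nat -> Z) (s : nat) :
  zrec y (s + k) = 0%Z -> div_window m y (S s) -> div_window m y s.
Proof.
  intros Hrec Hwin [|i] Hi.
  - rewrite zrec_last in Hrec. replace (s + k - k)%nat with s in Hrec by lia.
    assert (Hsq : (a k * a k = 1)%Z) by (destruct (Z.abs_spec (a k)); nia).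
    replace (y (s + 0)%nat)
      with (- a k * (y (s + k)%nat + zsum (fun j => a (S j) * y (s + k - S j)%nat) (k - 1)))%Z
      by (rewrite Nat.add_0_r; nia).
    apply Z.divide_mul_r, Z.divide_add_r.
    + replace (s + k)%nat with (S s + (k - 1))%nat by lia. apply Hwin. lia.
    + apply zsum_divide. intros j Hj. apply Z.divide_mul_r.
      replace (s + k - S j)%nat with (S s + (k - 2 - j))%nat by lia. apply Hwin. lia.
  - replace (s + S i)%nat with (S s + i)%nat by lia. apply Hwin. lia.
Qed.

Lemma div_window_spread (m : Z) (y : nat -> Z) (N s : nat) :
  (forall t, (k <= t <= N)%nat -> zrec y t = 0%Z) ->
  (s + k <= N + 1)%nat -> div_window m y s ->
  forall n, (n <= N)%nat -> (m | y n)%Z.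
Proof.
  intros Hrec Hs Hwin.
  assert (Hfwd : forall d, (s + d + k <= N + 1)%nat -> div_window m y (s + d)).
  { induction d as [|d IH]; intros Hd; [now rewrite Nat.add_0_r|].
    rewrite Nat.add_succ_r. apply div_window_forward; [apply Hrec; lia | apply IH; lia]. }
  assert (Hbwd : forall d, (d <= s)%nat -> div_window m y (s - d)).
  { induction d as [|d IH]; intros Hd; [now rewrite Nat.sub_0_r|].
    apply div_window_backward; [apply Hrec; lia|].
    replace (S (s - S d)) with (s - d)%nat by lia. apply IH; lia. }
  intros n Hn. set (s' := Nat.min n (N + 1 - k)).
  assert (Hwin' : div_window m y s').
  { destruct (Nat.le_gt_cases s s') as [Hle | Hgt].
    - replace s' with (s + (s' - s))%nat by lia. apply Hfwd. lia.
    - replace s' with (s - (s - s'))%nat by lia. apply Hbwd. lia. }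
  replace n with (s' + (n - s'))%nat by lia. apply Hwin'. lia.
Qed.

Lemma periodic_mod_of_window (m : Z) (z : nat -> Z) (N P s : nat) :
  (forall t, (k <= t <= N)%nat -> zrec z t = 0%Z) ->
  (s + P + k <= N + 1)%nat ->
  (forall i, (i < k)%nat -> (m | z (s + i)%nat - z (s + P + i)%nat)%Z) ->
  forall x, (x + P <= N)%nat -> (m | z x - z (x + P)%nat)%Z.
Proof.
  intros Hrec Hs Hwin x Hx.
  apply (div_window_spread m (fun x => z x - z (x + P)%nat)%Z (N - P) s); [| lia | | lia].
  - intros t Ht. rewrite zrec_sub_shift by lia. rewrite !Hrec by lia. reflexivity.
  - intros i Hi. replace (s + i + P)%nat with (s + P + i)%nat by lia. now apply Hwin.
Qed.

End IntegerRecurrence.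

Lemma periodic_mod_multiple (m : Z) (f : nat -> Z) (L B : nat) :
  (forall v, (v + L < B)%nat -> (m | f (v + L)%nat - f v)%Z) ->
  forall c u, (u + c * L < B)%nat -> (m | f (u + c * L)%nat - f u)%Z.
Proof.
  intros Hper. induction c as [|c IH]; intros u Hu.
  - rewrite Nat.mul_0_l, Nat.add_0_r, Z.sub_diag. apply Z.divide_0_r.
  - replace (f (u + S c * L)%nat - f u)%Z
      with ((f (u + c * L + L)%nat - f (u + c * L)%nat) + (f (u + c * L)%nat - f u))%Z
      by (replace (u + S c * L)%nat with (u + c * L + L)%nat by lia; ring).
    apply Z.divide_add_r; [apply Hper | apply IH]; lia.
Qed.

Lemma zsum_periodic_mod (m : Z) (f : nat -> Z) (L c : nat) :
  (forall v, (v + L < c * L)%nat -> (m | f (v + L)%nat - f v)%Z) ->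
  (m | zsum f (c * L) - Z.of_nat c * zsum f L)%Z.
Proof.
  intros Hper.
  assert (Hblocks : forall c', (c' <= c)%nat -> (m | zsum f (c' * L) - Z.of_nat c' * zsum f L)%Z).
  { induction c' as [|c' IH]; intros Hc'; [simpl; apply Z.divide_0_r|].
    replace (S c' * L)%nat with (c' * L + L)%nat by lia.
    rewrite zsum_split, Nat2Z.inj_succ.
    assert (Hblock : zsum (fun u => f (c' * L + u)%nat) L
                     = (zsum (fun u => f (u + c' * L)%nat - f u) L + zsum f L)%Z).
    { rewrite zsum_sub, (zsum_ext (fun u => f (u + c' * L)%nat) (fun u => f (c' * L + u)%nat));
        [ring | intros u _; f_equal; lia]. }
    rewrite Hblock.
    replace (zsum f (c' * L) + (zsum (fun u => f (u + c' * L)%nat - f u) L + zsum f L)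
             - Z.succ (Z.of_nat c') * zsum f L)%Z
      with ((zsum f (c' * L) - Z.of_nat c' * zsum f L)
            + zsum (fun u => f (u + c' * L)%nat - f u) L)%Z by ring.
    apply Z.divide_add_r; [apply IH; lia|].
    apply zsum_divide. intros u Hu. apply (periodic_mod_multiple m f L (c * L)); [exact Hper|].
    assert (c' * L + L <= c * L)%nat by nia. lia. }
  now apply Hblocks.
Qed.

(** * Real linear recurrences and their integer roundings *)

Section RealRecurrence.

Variables (k : nat) (a : nat -> Z).
Hypothesis k_pos : (1 <= k)%nat.

Definition rrec (d : nat -> R) (t : nat) : R :=
  d t + sum_f_R0 (fun i => IZR (a (S i)) * d (t - S i)%nat) (k - 1).

Definition coef_mass : R := sum_f_R0 (fun i => Rabs (IZR (a (S i)))) (k - 1).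

Lemma rrec_sub (d e : nat -> R) (t : nat) :
  rrec (fun n => d n - e n) t = rrec d t - rrec e t.
Proof.
  unfold rrec.
  rewrite (sum_eq _ (fun i => IZR (a (S i)) * d (t - S i)%nat - IZR (a (S i)) * e (t - S i)%nat))
    by (intros; ring).
  rewrite minus_sum. ring.
Qed.

Lemma rrec_shift (d : nat -> R) (q t : nat) :
  (k <= t)%nat -> rrec (fun n => d (n + q)%nat) t = rrec d (t + q).
Proof.
  intros Ht. unfold rrec. f_equal. apply sum_eq. intros i Hi.
  now replace (t - S i + q)%nat with (t + q - S i)%nat by lia.
Qed.

Lemma rrec_IZR (z : nat -> Z) (t : nat) :
  IZR (zrec k a z t) = rrec (fun n => IZR (z n)) t.
Proof.
  unfold zrec, rrec. replace k with (S (k - 1)) at 1 by lia.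
  rewrite plus_IZR, zsum_IZR. f_equal. apply sum_eq. intros i _. apply mult_IZR.
Qed.

Lemma rrec_small (e : nat -> R) (del : R) (t : nat) :
  (forall n, (n <= t)%nat -> Rabs (e n) <= del) ->
  Rabs (rrec e t) <= del * (1 + coef_mass).
Proof.
  intros He. unfold rrec, coef_mass.
  eapply Rle_trans; [apply Rabs_triang|].
  assert (Hsum : Rabs (sum_f_R0 (fun i => IZR (a (S i)) * e (t - S i)%nat) (k - 1))
                 <= del * sum_f_R0 (fun i => Rabs (IZR (a (S i)))) (k - 1)).
  { eapply Rle_trans; [apply Rsum_abs|]. rewrite scal_sum.
    apply sum_Rle. intros i _. rewrite Rabs_mult.
    apply Rmult_le_compat_l; [apply Rabs_pos | apply He; lia]. }
  pose proof (He t (le_n t)). lra.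
Qed.

Lemma zrec_of_rounding (d : nat -> R) (z : nat -> Z) (del : R) (N : nat) :
  del * (1 + coef_mass) < 1 ->
  (forall n, (n <= N)%nat -> Rabs (d n - IZR (z n)) <= del) ->
  forall t, (t <= N)%nat -> rrec d t = 0 -> zrec k a z t = 0%Z.
Proof.
  intros Hdel Hz t Ht Hd.
  assert (Hres : Rabs (IZR (zrec k a z t)) < 1).
  { rewrite rrec_IZR.
    replace (rrec (fun n => IZR (z n)) t) with (- rrec (fun n => d n - IZR (z n)) t)
      by (rewrite rrec_sub; lra).
    rewrite Rabs_Ropp. eapply Rle_lt_trans; [|exact Hdel].
    apply rrec_small. intros n Hn. apply Hz. lia. }
  rewrite <- abs_IZR in Hres. apply lt_IZR in Hres. lia.
Qed.

End RealRecurrence.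

Lemma exists_small (A B c : R) :
  0 <= A -> 0 <= B -> 0 < c -> exists del, 0 < del /\ del * A < 1 /\ del * B < c.
Proof.
  intros HA HB Hc. exists (Rmin (/ (A + 1)) (c / (B + 1))).
  assert (Hmin1 := Rmin_l (/ (A + 1)) (c / (B + 1))).
  assert (Hmin2 := Rmin_r (/ (A + 1)) (c / (B + 1))).
  assert (H1 : / (A + 1) * A < 1) by (apply (Rmult_lt_reg_l (A + 1)); [lra|]; field_simplify; lra).
  assert (H2 : c / (B + 1) * B < c) by (apply (Rmult_lt_reg_l (B + 1)); [lra|]; field_simplify; nra).
  split; [apply Rmin_glb_lt; [apply Rinv_0_lt_compat | apply Rdiv_lt_0_compat]; lra|].
  split; [apply Rle_lt_trans with (/ (A + 1) * A) | apply Rle_lt_trans with (c / (B + 1) * B)];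
    auto; apply Rmult_le_compat_r; auto.
Qed.

Section Returns.

Variables (w : nat -> R) (k : nat) (a : nat -> Z).
Hypothesis w_rep : rep_prop w.
Hypothesis k_pos : (1 <= k)%nat.
Hypothesis a_last_unit : Z.abs (a k) = 1%Z.
Hypothesis w_rec : forall n, (k <= n)%nat -> rrec k a w n = 0.

Lemma return_diff_rec (q t : nat) :
  (k <= t)%nat -> rrec k a (fun n => w n - w (n + q)%nat) t = 0.
Proof.
  intros Ht. rewrite rrec_sub, (rrec_shift k a k_pos w) by exact Ht.
  rewrite !w_rec by lia. ring.
Qed.

Lemma rounded_returns (del : R) (N : nat) :
  0 < del -> del * (1 + coef_mass k a) < 1 -> (1 <= N)%nat ->
  exists q (z : nat -> Z), (1 <= q)%nat /\
    (forall n, (n <= N * q)%nat -> Rabs (w n - w (n + q)%nat - IZR (z n)) < del) /\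
    (forall t, (k <= t <= N * q)%nat -> zrec k a z t = 0%Z).
Proof.
  intros Hdel Hmass HR. destruct (w_rep del N Hdel HR) as [q [Hq Hret]].
  set (z n := nearest (w n - w (n + q)%nat)).
  assert (Hz : forall n, (n <= N * q)%nat -> Rabs (w n - w (n + q)%nat - IZR (z n)) < del).
  { intros n Hn. unfold z. rewrite nearest_dist. apply Hret, Hn. }
  exists q, z. split; [exact Hq|]. split; [exact Hz|].
  intros t Ht. apply (zrec_of_rounding k a k_pos (fun n => w n - w (n + q)%nat) z del (N * q));
    [exact Hmass | intros n Hn; apply Rlt_le, Hz, Hn | lia | apply return_diff_rec; lia].
Qed.

Lemma long_return_near_multiple (q L m N : nat) (z : nat -> Z) (del : R) :
  (forall n, (n <= N * q)%nat -> Rabs (w n - w (n + q)%nat - IZR (z n)) < del) ->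
  (forall x, (x + L * q <= N * q)%nat -> (Z.of_nat m | z x - z (x + L * q)%nat)%Z) ->
  forall n, (n + m * L * q <= N * q)%nat ->
  exists K, Rabs (w n - w (n + m * L * q)%nat - IZR (Z.of_nat m * K)) <= INR (m * L) * del.
Proof.
  intros Hz Hper n Hn. set (f v := z (n + v * q)%nat).
  assert (Hvq : forall v, (v <= m * L)%nat -> (n + v * q <= n + m * L * q)%nat) by (intros; nia).
  assert (Htel : Rabs (w n - w (n + m * L * q)%nat - IZR (zsum f (m * L))) <= INR (m * L) * del).
  { pose proof (telescope_near_int (fun u => w (n + u * q)%nat) f del (m * L)) as T.
    cbv beta in T. rewrite Nat.mul_0_l, Nat.add_0_r in T. apply T.
    intros u Hu. replace (n + S u * q)%nat with (n + u * q + q)%nat by lia.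
    apply Hz. specialize (Hvq u ltac:(lia)). lia. }
  assert (Hdiv : (Z.of_nat m | zsum f (m * L))%Z).
  { assert (Hblocks := zsum_periodic_mod (Z.of_nat m) f L m).
    replace (zsum f (m * L)) with ((zsum f (m * L) - Z.of_nat m * zsum f L) + Z.of_nat m * zsum f L)%Z
      by ring.
    apply Z.divide_add_r; [apply Hblocks | apply Z.divide_factor_l].
    intros v Hv. unfold f. replace (n + (v + L) * q)%nat with (n + v * q + L * q)%nat by lia.
    apply Z.divide_opp_r. rewrite Z.opp_sub_distr, Z.add_comm, Z.add_opp_r.
    apply Hper. specialize (Hvq (v + L)%nat ltac:(lia)). nia. }
  destruct Hdiv as [K HK]. exists K. now rewrite Z.mul_comm, <- HK.
Qed.

Lemma returns_near_multiples (m : nat) :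
  (1 <= m)%nat ->
  forall del N, 0 < del -> (1 <= N)%nat ->
  exists q, (1 <= q)%nat /\ forall n, (n <= N * q)%nat ->
    exists K, Rabs (w n - w (n + q)%nat - IZR (Z.of_nat m * K)) < del.
Proof.
  intros Hm del N Hdel HN.
  set (M := Z.to_nat (Z.of_nat m ^ Z.of_nat k)).
  assert (HM : (1 <= M)%nat).
  { assert (0 < Z.of_nat m ^ Z.of_nat k)%Z by (apply Z.pow_pos_nonneg; lia). lia. }
  destruct (exists_small (1 + coef_mass k a) (INR (m * M)) del) as [eta [Heta [Hmass Hsmall]]];
    [ pose proof (cond_pos_sum (fun i => Rabs (IZR (a (S i)))) (k - 1) (fun i => Rabs_pos _));
      unfold coef_mass; lra
    | apply pos_INR | exact Hdel |].
  set (N' := ((N + 2) * m * M + k)%nat).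
  destruct (rounded_returns eta N' Heta Hmass ltac:(lia)) as [q [z [Hq [Hz Hzrec]]]].
  destruct (window_pigeonhole (Z.of_nat m) k (fun j t => z (j * q + t)%nat) ltac:(lia))
    as [i [j [Hij Hwin]]]. fold M in Hij.
  set (L := (j - i)%nat).
  assert (HjL : (i * q + L * q = j * q)%nat) by (unfold L; nia).
  assert (HL : (1 <= L <= M)%nat) by (unfold L; lia).
  assert (HjN : (j * q + k <= N' * q)%nat).
  { assert (j * q <= M * q)%nat by nia. assert (M <= m * M)%nat by nia. unfold N'; nia. }
  assert (Hper : forall x, (x + L * q <= N' * q)%nat -> (Z.of_nat m | z x - z (x + L * q)%nat)%Z).
  { apply (periodic_mod_of_window k a k_pos a_last_unit _ _ _ _ (i * q)); [exact Hzrec | lia|].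
    intros t Ht. rewrite HjL.
    apply Hwin, Ht. }
  exists (m * L * q)%nat. split; [nia|].
  intros n Hn.
  destruct (long_return_near_multiple q L m N' z eta Hz Hper n) as [K HK].
  { assert (m * L * q <= m * M * q)%nat by nia.
    assert (N * (m * L * q) <= N * (m * M * q))%nat by nia. unfold N'; nia. }
  exists K. eapply Rle_lt_trans; [exact HK|].
  apply Rle_lt_trans with (INR (m * M) * eta); [|lra].
  apply Rmult_le_compat_r; [lra | apply le_INR; nia].
Qed.

End Returns.

Lemma tdist_scaled_near_multiple (x y d : R) (p m K : Z) :
  m <> 0%Z -> Rabs (x - y - IZR (m * K)) <= d ->
  tdist (IZR p / IZR m * x) (IZR p / IZR m * y) <= Rabs (IZR p / IZR m) * d.
Proof.
  intros Hm Hxy. unfold tdist. eapply Rle_trans; [apply (tnorm_le_int _ (p * K))|].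
  replace (IZR p / IZR m * x - IZR p / IZR m * y - IZR (p * K))
    with (IZR p / IZR m * (x - y - IZR (m * K)))
    by (rewrite !mult_IZR; field; apply not_0_IZR, Hm).
  rewrite Rabs_mult. apply Rmult_le_compat_l; [apply Rabs_pos | exact Hxy].
Qed.

Lemma rational_common_returns (w : nat -> R) (k : nat) (a : nat -> Z) (r : Q) :
  rep_prop w -> (1 <= k)%nat -> Z.abs (a k) = 1%Z ->
  (forall n, (k <= n)%nat -> rrec k a w n = 0) ->
  forall eps N, 0 < eps -> (1 <= N)%nat ->
  exists q, (1 <= q)%nat /\ forall n, (n <= N * q)%nat ->
    tdist (w n) (w (n + q)%nat) < eps /\
    tdist (Q2R r * w n) (Q2R r * w (n + q)%nat) < eps.
Proof.
  intros Hw Hk Ha Hrec eps N Heps HN.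
  set (s := Rabs (Q2R r)).
  assert (Hs : 0 <= s) by apply Rabs_pos.
  destruct (returns_near_multiples w k a Hw Hk Ha Hrec (Pos.to_nat (Qden r)) ltac:(lia)
              (eps / (1 + s)) N ltac:(apply Rdiv_lt_0_compat; lra) HN) as [q [Hq Hret]].
  exists q. split; [exact Hq|]. intros n Hn.
  destruct (Hret n Hn) as [K HK]. rewrite positive_nat_Z in HK.
  assert (Hdel : eps / (1 + s) * (1 + s) = eps) by (field; lra).
  split.
  - eapply Rle_lt_trans; [apply tnorm_le_int|]. eapply Rlt_le_trans; [exact HK|].
    apply (Rmult_le_reg_r (1 + s)); [lra|]. rewrite Hdel. nra.
  - eapply Rle_lt_trans.
    { apply (tdist_scaled_near_multiple _ _ (eps / (1 + s)) (Qnum r) (Z.pos (Qden r)) K); [lia | apply Rlt_le, HK]. }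
    change (IZR (Qnum r) / IZR (Z.pos (Qden r))) with (Q2R r). fold s.
    apply (Rmult_lt_reg_r (1 + s)); [lra|]. rewrite Rmult_assoc, Hdel.
    assert (0 < eps / (1 + s)) by (apply Rdiv_lt_0_compat; lra). nra.
Qed.

Theorem lemma3p3 (w : nat -> R) (k : nat) (a : nat -> Z) :
  rep_prop w ->
  (1 <= k)%nat ->
  Z.abs (a k) = 1%Z ->
  (forall n : nat, (k <= n)%nat ->
     w n + sum_f_R0 (fun i => IZR (a (S i)) * w (n - S i)%nat) (k - 1) = 0) ->
  forall r : Q,
    rep_prop (fun n => Q2R r * w n) /\
    joint_rep_prop (cons (fun n => Q2R r * w n) (cons w nil)).
Proof.
  intros Hw Hk Ha Hrec r.
  pose proof (rational_common_returns w k a r Hw Hk Ha Hrec) as Hcommon.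
  assert (Hrw : rep_prop (fun n => Q2R r * w n)).
  { intros eps N Heps HN. destruct (Hcommon eps N Heps HN) as [q [Hq Hret]].
    exists q. split; [exact Hq|]. intros n Hn. exact (proj2 (Hret n Hn)). }
  split; [exact Hrw|]. split.
  - intros v [<- | [<- | []]]; assumption.
  - intros G HG eps N Heps HN. destruct (Hcommon eps N Heps HN) as [q [Hq Hret]].
    exists q. split; [exact Hq|]. intros v Hv n Hn.
    destruct (HG v Hv) as [<- | [<- | []]]; [exact (proj2 (Hret n Hn)) | exact (proj1 (Hret n Hn))].
Qed.
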